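(* Let $m$ be an odd integer and $a\in\mathbb{F}_{2^{3m}}^*$. The (APN) map $f:\mathbb{F}_{2^{3m}}\to\mathbb{F}_{2^{3m}}$ given by \[f(x)=x^3+a^{-1}\mathrm{Tr}_{2^{3m}/2^3}(a^3x^9+a^6x^{18})\] satisfies $M_1(f)=2^{3m-1}$ and $M_4(f)=2^{3m-3}$ (and $M_r(f)=0$ otherwise); in particular $|\mathrm{Im}(f)|=5\cdot 2^{3m-3}$.
   Context: $\mathrm{Tr}_{2^{3m}/2^3}(x)=\sum_{j=0}^{m-1}x^{8^j}$ is the trace map from $\mathbb{F}_{2^{3m}}$ onto $\mathbb{F}_8$. $M_r(f)$ is the number of $y\in\mathbb{F}_{2^{3m}}$ with exactly $r$ preimages under $f$. *)

From HB Require Import structures.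
From mathcomp Require Import all_boot all_order all_algebra all_field.
Set Implicit Arguments. Unset Strict Implicit. Unset Printing Implicit Defensive.
Import GRing.Theory.
Local Open Scope ring_scope.

Definition trace8 (F : finFieldType) (m : nat) (x : F) : F :=
  \sum_(j < m) x ^+ (8 ^ j)%N.

Definition Mr (F : finFieldType) (f : F -> F) (r : nat) : nat :=
  #|[set y : F | #|[set x : F | f x == y]| == r]|.

Definition fmap (F : finFieldType) (m : nat) (a : F) (x : F) : F :=
  x ^+ 3 + a^-1 * trace8 m (a ^+ 3 * x ^+ 9 + a ^+ 6 * x ^+ 18).

From HB Require Import structures.
From mathcomp Require Import all_boot all_order all_algebra all_field.
From mathcomp Require Import all_fingroup all_solvable.
From mathcomp Require Import ring zify.
Set Implicit Arguments. Unset Strict Implicit. Unset Printing Implicit Defensive.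
Import GRing.Theory.
Local Open Scope ring_scope.

(* Put u = a x^3; since 3 is prime to 2^(3m) - 1 this is a bijection of F,
   and f(x) = a^-1 g(u) with g(u) = u + Tr(u^3 + u^6).  For c in the subfield F_8
   (the fixed points of x |-> x^8) the F_8-linearity of Tr gives
     g(u + c) = g(u) + Q(Tr u, c)
   for an explicit polynomial Q, and g(u') = g(u) forces u' - u in F_8.  Hence the
   fiber of g through u has as many points as Q(Tr u, .) has roots in F_8: it only
   depends on t = Tr u in F_8.  Computing in an explicit model of F_8 (bit triples
   over a root w of X^3 + X + 1) shows that this number is 1 for four values of t
   and 4 for the four others, and Tr : F -> F_8 has fibers of size 2^(3m-3). *)

Section CharTwo.

Variable F : finFieldType.
Hypothesis ch : 2 \in [pchar F].

Lemma exp2nD k (x y : F) : (x + y) ^+ (2 ^ k) = x ^+ (2 ^ k) + y ^+ (2 ^ k).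
Proof.
by apply: exprDn_pchar; rewrite (eq_pnat _ (pcharf_eq ch)) pnatX pnat_id.
Qed.

Lemma exp2n_sum k (I : Type) (r : seq I) (P : pred I) (G : I -> F) :
  (\sum_(i <- r | P i) G i) ^+ (2 ^ k) = \sum_(i <- r | P i) G i ^+ (2 ^ k).
Proof.
by apply: (big_morph (fun x : F => x ^+ (2 ^ k))) => [x y|]; rewrite ?exp2nD // expr0n expn_eq0.
Qed.

Lemma exp8n_sum j (I : Type) (r : seq I) (P : pred I) (G : I -> F) :
  (\sum_(i <- r | P i) G i) ^+ (8 ^ j) = \sum_(i <- r | P i) G i ^+ (8 ^ j).
Proof. by rewrite -[8%N]/(2 ^ 3)%N -expnM exp2n_sum. Qed.

End CharTwo.

Definition inF8 (F : finFieldType) (c : F) := c ^+ 8 == c.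

Section SubfieldF8.

Variable F : finFieldType.
Hypothesis ch : 2 \in [pchar F].

Lemma inF8_exp8n (c : F) j : inF8 c -> c ^+ (8 ^ j) = c.
Proof.
by move/eqP=> c8; elim: j => [|j IHj]; rewrite ?expr1 // expnSr exprM IHj c8.
Qed.

Lemma inF8D (x y : F) : inF8 x -> inF8 y -> inF8 (x + y).
Proof.
move=> /eqP x8 /eqP y8; apply/eqP.
by have := exp2nD ch 3 x y; rewrite x8 y8.
Qed.

Lemma inF8M (x y : F) : inF8 x -> inF8 y -> inF8 (x * y).
Proof. by move=> /eqP x8 /eqP y8; rewrite /inF8 exprMn x8 y8. Qed.

Lemma inF8V (x : F) : inF8 x -> inF8 x^-1.
Proof. by move=> /eqP x8; rewrite /inF8 exprVn x8. Qed.

Lemma inF8X (x : F) n : inF8 x -> inF8 (x ^+ n).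
Proof. by move=> /eqP x8; rewrite /inF8 exprAC x8. Qed.

End SubfieldF8.

Section Trace.

Variables (F : finFieldType) (m : nat).
Hypothesis ch : 2 \in [pchar F].

Lemma traceD (x y : F) : trace8 m (x + y) = trace8 m x + trace8 m y.
Proof.
rewrite /trace8 -big_split; apply: eq_bigr => j _.
by rewrite -[8%N]/(2 ^ 3)%N -expnM exp2nD.
Qed.

Lemma traceZ (c x : F) : inF8 c -> trace8 m (c * x) = c * trace8 m x.
Proof.
by move=> c8; rewrite /trace8 mulr_sumr; apply: eq_bigr => j _; rewrite exprMn (inF8_exp8n _ c8).
Qed.

Lemma trace_sqr (x : F) : trace8 m (x ^+ 2) = trace8 m x ^+ 2.
Proof.
by rewrite /trace8 (exp2n_sum ch 1); apply: eq_bigr => j _; rewrite exprAC.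
Qed.

Lemma trace_F8 (c : F) : odd m -> inF8 c -> trace8 m c = c.
Proof.
move=> m_odd c8; rewrite /trace8 (eq_bigr (fun _ => c)) => [|j _]; last exact: inF8_exp8n.
rewrite sumr_const card_ord -(odd_double_half m) m_odd mulrS -mul2n mulrnA.
by rewrite mulr2n addrr_pchar2 // mul0rn addr0.
Qed.

Hypothesis cardF : #|F| = (8 ^ m)%N.

(* When #|F| = 8^m, Tr takes its values in F_8: Tr(x)^8 = sum_(1 <= j <= m) x^(8^j)
   and x^(8^m) = x ... *)
Lemma trace_inF8 (x : F) : inF8 (trace8 m x).
Proof.
apply/eqP; rewrite /trace8 (exp8n_sum ch 1) expn1.
under eq_bigr => j _ do rewrite -exprM -expnSr.
have shift := etrans (esym (@big_ord_recl F 0 +%R m (fun i : 'I_m.+1 => x ^+ (8 ^ i))))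
                     (@big_ord_recr F 0 +%R m (fun i : 'I_m.+1 => x ^+ (8 ^ i))).
rewrite /= -cardF expf_card expn0 expr1 addrC in shift.
exact: addrI shift.
Qed.

(* ... it is not identically zero, being a nonzero polynomial of degree 8^(m-1) < #|F| ... *)
Lemma trace_neq0 : (0 < m)%N -> exists x : F, trace8 m x != 0.
Proof.
move=> m_gt0; apply/existsP; apply: contraT; rewrite negb_exists => /forallP T0.
pose p : {poly F} := \sum_(j < m) 'X^(8 ^ j).
have p_trace x : p.[x] = trace8 m x.
  by rewrite horner_sum; apply: eq_bigr => j _; rewrite hornerXn.
have p_neq0 : p != 0.
  have p1 : p`_1 = 1.
    rewrite coef_sum -(prednK m_gt0) big_ord_recl coefXn expn0 eqxx big1 ?addr0 // => j _.
    rewrite coefXn lift0 expnS ltn_eqF //; have := expn_gt0 8 j; lia.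
  by apply: contraPneq p1 => ->; rewrite coef0 => /eqP; rewrite eq_sym oner_eq0.
have size_p : (size p <= (8 ^ m.-1).+1)%N.
  apply: leq_trans (size_sum _ _ _) _; apply/bigmax_leqP => j _.
  by rewrite size_polyXn ltnS leq_exp2l // -ltnS prednK.
have all_roots : all (root p) (enum (mem (@predT F))).
  by apply/allP => x _; rewrite /root p_trace; move: (T0 x); rewrite negbK.
have := max_poly_roots p_neq0 all_roots (enum_uniq _); rewrite -cardE cardF.
move/leq_trans/(_ size_p); rewrite -(prednK m_gt0) expnS ltnS leqNgt.
by rewrite ltn_Pmull ?expn_gt0.
Qed.

(* ... so every t in F_8 has as many Tr-preimages as 0 (translate by a preimage of t) ... *)
Lemma card_trace_fiber (t : F) : (0 < m)%N -> inF8 t ->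
  #|[set x : F | trace8 m x == t]| = #|[set x : F | trace8 m x == 0]|.
Proof.
move=> m_gt0 t8; have [x0 Tx0] := trace_neq0 m_gt0.
pose xt := t / trace8 m x0 * x0.
have Txt : trace8 m xt = t.
  by rewrite traceZ ?mulfVK // inF8M ?inF8V ?trace_inF8.
rewrite -[RHS](card_imset _ (addrI xt)); apply: eq_card => x; rewrite inE.
apply/eqP/imsetP => [Tx | [y]].
  exists (x - xt); last by rewrite addrC subrK.
  by rewrite inE GRing.subr_pchar2 // traceD Tx Txt addrr_pchar2.
by rewrite inE => /eqP Ty ->; rewrite traceD Txt Ty addr0.
Qed.

Lemma card_trace_pred (P : pred F) : (0 < m)%N ->
  #|[set x : F | P (trace8 m x)]| =
    (#|[set t : F | inF8 t && P t]| * #|[set x : F | trace8 m x == 0%R]|)%N.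
Proof.
move=> m_gt0; rewrite -sum1_card.
rewrite (partition_big (trace8 m) (fun t => inF8 t && P t)) => [|x]; last first.
  by rewrite inE => Px; rewrite Px trace_inF8.
rewrite -sum_nat_const; apply: eq_big => [t | t /andP[t8 Pt]]; first by rewrite inE.
rewrite -(card_trace_fiber m_gt0 t8) -sum1_card; apply: eq_bigl => x.
by rewrite !inE; case: eqP => [->|]; rewrite ?Pt ?andbF.
Qed.

End Trace.

(* In a finite field, x |-> x^k is injective as soon as k > 0 is prime to #|F| - 1:
   a Bezout relation k * k' = 1 + l * (#|F| - 1) inverts it. *)
Lemma expf_inj (F : finFieldType) k : (0 < k)%N -> coprime k #|F|.-1 ->
  injective (fun x : F => x ^+ k).
Proof.
move=> k_gt0 co; case: (egcdnP #|F|.-1 k_gt0) => k' l Bezout _.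
rewrite (eqP co) in Bezout.
have cycle (x : F) : x ^+ (l * #|F|.-1 + 1) = x.
  elim: l {Bezout} => [|l IHl]; first by rewrite expr1.
  rewrite mulSn -addnA exprD IHl -exprSr prednK ?expf_card //.
  by apply/card_gt0P; exists 0.
by move=> x y /= /(congr1 (fun z => z ^+ k')); rewrite -!exprM mulnC Bezout !cycle.
Qed.

Lemma coprime3_pow8 m : odd m -> coprime 3 (8 ^ m).-1.
Proof.
move=> m_odd; rewrite prime_coprime // /dvdn.
rewrite -(odd_double_half m) m_odd -mul2n expnS expnM.
have : ((8 ^ 2) ^ m./2 %% 3 = 1)%N by rewrite -modnXm exp1n.
lia.
Qed.

(* 7 divides 8^m - 1, so that a field with 8^m elements contains a root of X^3 + X + 1. *)
Lemma dvd7_pow8_pred m : (7 %| (8 ^ m).-1)%N.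
Proof.
have : (8 ^ m %% 7 = 1)%N by rewrite -modnXm exp1n.
by rewrite /dvdn; lia.
Qed.

(* f(x) = a^-1 g(a x^3) with g(u) = u + Tr(u^3 + u^6); and g(u + c) - g(u) = Q(Tr u, c)
   for c in F_8, with Q the polynomial Qshift below. *)
Definition gmap (F : finFieldType) (m : nat) (u : F) : F := u + trace8 m (u ^+ 3 + u ^+ 6).

Definition Qshift (F : finFieldType) (t c : F) : F :=
  c + (c * t ^+ 2 + c ^+ 2 * t + c ^+ 3 + c ^+ 2 * t ^+ 4 + c ^+ 4 * t ^+ 2 + c ^+ 6).

Definition nrootsQ (F : finFieldType) (t : F) : nat :=
  #|[set c : F | inF8 c && (Qshift t c == 0)]|.

Lemma fmapE (F : finFieldType) m (a x : F) : a != 0 ->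
  fmap m a x = a^-1 * gmap m (a * x ^+ 3).
Proof. by move=> a_neq0; rewrite /fmap /gmap mulrDr mulKf //; congr (_ + _ * trace8 m _); ring. Qed.

Section FibersOfG.

Variables (F : finFieldType) (m : nat).
Hypotheses (ch : 2 \in [pchar F]) (m_odd : odd m).

(* Expand (u + c)^3 and (u + c)^6 (using (x + y)^2 = x^2 + y^2), then use the
   F_8-linearity of Tr, Tr(x^2) = Tr(x)^2, and Tr c' = c' for c' in F_8. *)
Lemma gmap_shift (u c : F) : inF8 c -> gmap m (u + c) = gmap m u + Qshift (trace8 m u) c.
Proof.
move=> c8; have cX n : inF8 (c ^+ n) by apply: inF8X.
have sqrD (x y : F) : (x + y) ^+ 2 = x ^+ 2 + y ^+ 2 by apply: (exp2nD ch 1).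
have cube : (u + c) ^+ 3 = u ^+ 3 + c * u ^+ 2 + c ^+ 2 * u + c ^+ 3.
  by rewrite exprS sqrD; ring.
have sixth : (u + c) ^+ 6 = u ^+ 6 + c ^+ 2 * (u ^+ 2) ^+ 2 + c ^+ 4 * u ^+ 2 + c ^+ 6.
  by rewrite -[6%N]/(3 * 2)%N exprM cube !sqrD; ring.
rewrite /gmap cube sixth.
have -> : u ^+ 3 + c * u ^+ 2 + c ^+ 2 * u + c ^+ 3 +
    (u ^+ 6 + c ^+ 2 * (u ^+ 2) ^+ 2 + c ^+ 4 * u ^+ 2 + c ^+ 6) =
  (u ^+ 3 + u ^+ 6) + c * u ^+ 2 + c ^+ 2 * u + c ^+ 3 + c ^+ 2 * (u ^+ 2) ^+ 2
    + c ^+ 4 * u ^+ 2 + c ^+ 6 by ring.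
rewrite !traceD // (trace_F8 ch m_odd (cX 3)) (trace_F8 ch m_odd (cX 6)).
rewrite (traceZ _ _ c8) !(traceZ _ _ (cX 2)) (traceZ _ _ (cX 4)) !trace_sqr //.
by rewrite /Qshift; ring.
Qed.

Hypothesis cardF : #|F| = (8 ^ m)%N.

(* g(u') = g(u) forces u' - u = Tr(...) - Tr(...) in F_8, so the fiber of g through u
   is u + {c in F_8 | Q(Tr u, c) = 0}. *)
Lemma card_gmap_fiber (u : F) :
  #|[set u' | gmap m u' == gmap m u]| = nrootsQ (trace8 m u).
Proof.
rewrite /nrootsQ -[RHS](card_imset _ (addrI u)); apply: eq_card => u'; rewrite inE.
apply/eqP/imsetP => [g_eq | [c]]; last first.
  by rewrite inE => /andP[c8 /eqP Q0] ->; rewrite gmap_shift // Q0 addr0.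
exists (u' - u); last by rewrite addrC subrK.
have c8 : inF8 (u' - u).
  have -> : u' - u = trace8 m (u ^+ 3 + u ^+ 6) - trace8 m (u' ^+ 3 + u' ^+ 6).
    rewrite -[u' in LHS](addrK (trace8 m (u' ^+ 3 + u' ^+ 6))) -/(gmap m u') g_eq.
    by rewrite /gmap; ring.
  by rewrite GRing.subr_pchar2 // inF8D ?trace_inF8.
rewrite inE c8 /=; apply/eqP; apply: (@addrI _ (gmap m u)).
by rewrite -gmap_shift // addr0 [u + _]addrC subrK.
Qed.

Lemma scaled_cube_inj (a : F) : a != 0 -> injective (fun x : F => a * x ^+ 3).
Proof.
move=> a_neq0 x y /(mulfI a_neq0); apply: expf_inj => //.
by rewrite cardF coprime3_pow8.
Qed.

Lemma card_fmap_fiber (a x : F) : a != 0 ->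
  #|[set x' | fmap m a x' == fmap m a x]| = nrootsQ (trace8 m (a * x ^+ 3)).
Proof.
move=> a_neq0; rewrite -card_gmap_fiber -[RHS](card_preimset _ (scaled_cube_inj a_neq0)).
by apply: eq_card => y; rewrite !inE !fmapE // (inj_eq (mulfI (invr_neq0 a_neq0))).
Qed.

End FibersOfG.

Lemma Mr_mul (F : finFieldType) (f : F -> F) r :
  (Mr f r * r)%N = #|[set x | #|[set x' | f x' == f x]| == r]|.
Proof.
rewrite -sum1_card (partition_big f (fun y => #|[set x' | f x' == y]| == r)) => [|x]; last first.
  by rewrite inE.
rewrite /Mr -sum_nat_const; apply: eq_big => [y | y]; first by rewrite inE.
rewrite inE => /eqP card_y; rewrite -[LHS]card_y -sum1_card; apply: eq_bigl => x.
by rewrite !inE; case: eqP => [->|]; rewrite ?card_y ?eqxx ?andbF.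
Qed.

Lemma card_image_two_fiber_sizes (F : finFieldType) (f : F -> F) r1 r2 :
  (0 < r1)%N -> (0 < r2)%N -> r1 != r2 ->
  (forall x, (#|[set x' | f x' == f x]| == r1) || (#|[set x' | f x' == f x]| == r2)) ->
  #|[set f x | x : F]| = (Mr f r1 + Mr f r2)%N.
Proof.
move=> r1_gt0 r2_gt0 r12 fiber_size.
have -> : [set f x | x : F] =
    [set y | #|[set x | f x == y]| == r1] :|: [set y | #|[set x | f x == y]| == r2].
  apply/setP => y; rewrite !inE; apply/imsetP/idP => [[x _ ->] | card_y].
    exact: fiber_size.
  have : (0 < #|[set x | f x == y]|)%N by case/orP: card_y => /eqP ->.
  by case/card_gt0P => x; rewrite inE => /eqP <-; exists x.
rewrite cardsU (_ : _ :&: _ = set0) ?cards0 ?subn0 //.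
by apply/setP => y; rewrite !inE; case: eqP => // ->; rewrite (negbTE r12).
Qed.

Lemma card_count (T : finType) (s : seq T) (P : pred T) :
  uniq s -> (forall x, x \in s) -> #|[set x | P x]| = count P s.
Proof.
move=> s_uniq s_all; rewrite -size_filter -(card_uniqP (filter_uniq P s_uniq)).
by apply: eq_card => x; rewrite inE mem_filter s_all andbT.
Qed.

(* An explicit model of F_8 = F_2[w]/(w^3 + w + 1): the triple (b0, b1, b2) stands
   for b0 + b1 w + b2 w^2.  All computations on F_8 are done by evaluation here. *)
Definition F8c := (bool * bool * bool)%type.

Definition addc (x y : F8c) : F8c :=
  let: (x0, x1, x2) := x in let: (y0, y1, y2) := y in (x0 (+) y0, x1 (+) y1, x2 (+) y2).

(* Schoolbook product followed by the reductions w^3 = w + 1 and w^4 = w^2 + w. *)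
Definition mulc (x y : F8c) : F8c :=
  let: (x0, x1, x2) := x in let: (y0, y1, y2) := y in
  let c0 := x0 && y0 in
  let c1 := (x0 && y1) (+) (x1 && y0) in
  let c2 := (x0 && y2) (+) (x1 && y1) (+) (x2 && y0) in
  let c3 := (x1 && y2) (+) (x2 && y1) in
  let c4 := x2 && y2 in
  (c0 (+) c3, c1 (+) c3 (+) c4, c2 (+) c4).

Definition zeroc : F8c := (false, false, false).
Definition onec : F8c := (true, false, false).
Definition expc (x : F8c) n := iter n (mulc x) onec.

Definition Qc (t c : F8c) : F8c :=
  addc c (addc (addc (addc (addc (addc (mulc c (expc t 2)) (mulc (expc c 2) t))
    (expc c 3)) (mulc (expc c 2) (expc t 4))) (mulc (expc c 4) (expc t 2))) (expc c 6)).

Definition enumc : seq F8c :=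
  [:: (false, false, false); (true, false, false); (false, true, false);
      (true, true, false); (false, false, true); (true, false, true);
      (false, true, true); (true, true, true)].

Definition rootsc (t : F8c) : nat := count (fun c => Qc t c == zeroc) enumc.

Lemma enumc_uniq : uniq enumc. Proof. by []. Qed.
Lemma mem_enumc x : x \in enumc. Proof. by case: x => [[[] []] []]. Qed.

Lemma rootsc_enum : map rootsc enumc = [:: 1; 4; 1; 4; 1; 4; 1; 4]%N.
Proof. by vm_compute. Qed.

Lemma rootsc_1or4 t : (rootsc t == 1%N) || (rootsc t == 4%N).
Proof. by case: t => [[[] []] []]; vm_compute. Qed.

Lemma mulc_expc6 x : x != zeroc -> mulc x (expc x 6) = onec.
Proof. by case: x => [[[] []] []]. Qed.

Lemma expc8 x : expc x 8 = x.
Proof. by case: x => [[[] []] []]. Qed.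

Lemma addc_eq0 x y : addc x y = zeroc -> x = y.
Proof. by case: x => [[[] []] []]; case: y => [[[] []] []]. Qed.

Section EmbedF8.

Variables (F : finFieldType) (w : F).
Hypotheses (ch : 2 \in [pchar F]) (w3 : w ^+ 3 = w + 1).

Definition embc (b : F8c) : F :=
  let: (b0, b1, b2) := b in (b0 : nat)%:R + (b1 : nat)%:R * w + (b2 : nat)%:R * w ^+ 2.

Lemma natr_addb (x y : bool) : ((x (+) y : nat)%:R : F) = (x : nat)%:R + (y : nat)%:R.
Proof. by case: x; case: y; rewrite /= ?addr0 ?add0r // addrr_pchar2. Qed.

Lemma natr_andb (x y : bool) : ((x && y : nat)%:R : F) = (x : nat)%:R * (y : nat)%:R.
Proof. by case: x; case: y; rewrite /= ?mulr0 ?mul0r ?mulr1. Qed.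

(* embc is a ring morphism, multiplication being compatible thanks to w^3 = w + 1. *)
Lemma embc0 : embc zeroc = 0. Proof. by rewrite /= !mul0r !addr0. Qed.
Lemma embc1 : embc onec = 1. Proof. by rewrite /= !mul0r !addr0. Qed.

Lemma embcD x y : embc (addc x y) = embc x + embc y.
Proof. by case: x => [[x0 x1] x2]; case: y => [[y0 y1] y2]; rewrite /= !natr_addb; ring. Qed.

Lemma embcM x y : embc (mulc x y) = embc x * embc y.
Proof.
case: x => [[x0 x1] x2]; case: y => [[y0 y1] y2]; rewrite /= !natr_addb !natr_andb.
apply/eqP; rewrite eq_sym -subr_eq0; apply/eqP.
transitivity (((x1 : nat)%:R * (y2 : nat)%:R + (x2 : nat)%:R * (y1 : nat)%:R
   + (x2 : nat)%:R * (y2 : nat)%:R * w) * (w ^+ 3 - (w + 1)) : F); first by ring.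
by rewrite w3 subrr mulr0.
Qed.

Lemma embcX x n : embc (expc x n) = embc x ^+ n.
Proof. by elim: n => [|n IHn]; rewrite ?embc1 // /expc iterS embcM IHn exprS. Qed.

(* The model is a field (every nonzero x has inverse x^6), so embc is injective ... *)
Lemma embc_inj : injective embc.
Proof.
move=> x y exy; have [/eqP/addc_eq0 //|xy_neq0] := boolP (addc x y == zeroc).
have := embc1; rewrite -(mulc_expc6 xy_neq0) embcM embcD exy addrr_pchar2 // mul0r.
by move/esym/eqP; rewrite oner_eq0.
Qed.

(* ... and its image, of size 8, fills up the at most 8 roots of X^8 - X. *)
Lemma F8_image : [set c : F | inF8 c] = [set embc b | b : F8c].
Proof.
apply/esym/eqP; rewrite eqEcard; apply/andP; split.
  by apply/subsetP => _ /imsetP[b _ ->]; rewrite inE /inF8 -embcX expc8.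
rewrite card_imset; last exact: embc_inj.
have p_neq0 : 'X^8 - 'X != 0 :> {poly F}.
  by rewrite -size_poly_eq0 size_polyDl ?size_polyXn // size_polyN size_polyX.
have := max_poly_roots p_neq0 _ (enum_uniq (mem [set c : F | inF8 c])).
rewrite -cardE size_polyDl ?size_polyXn ?size_polyN ?size_polyX // ltnS.
rewrite /F8c !card_prod card_bool; apply; apply/allP => c.
by rewrite mem_enum inE /root !hornerE subr_eq0.
Qed.

Lemma card_F8 (P : pred F) :
  #|[set t : F | inF8 t && P t]| = count (fun b => P (embc b)) enumc.
Proof.
rewrite -(card_count _ enumc_uniq mem_enumc) -(card_imset _ embc_inj).
apply: eq_card => t; rewrite inE.
have t8 : inF8 t = (t \in [set embc b | b : F8c]) by rewrite -F8_image inE.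
rewrite t8; apply/andP/imsetP => [[/imsetP[b _ ->] Pb] | [b]].
  by exists b; rewrite ?inE.
by rewrite inE => Pb ->; split; [apply: imset_f | ].
Qed.

End EmbedF8.

(* F contains a root of X^3 + X + 1 as soon as 7 divides #|F| - 1: an element z of
   order 7 is a root of (X^7 - 1)/(X - 1) = (X^3 + X + 1)(X^3 + X^2 + 1), and in the
   second case z^3 is a root of X^3 + X + 1. *)
Lemma exists_F8_generator (F : finFieldType) : 2 \in [pchar F] -> (7 %| #|F|.-1)%N ->
  exists w : F, w ^+ 3 = w + 1.
Proof.
move=> ch; rewrite -card_finField_unit => /(Cauchy (isT : prime 7))[x _ ox].
pose z : F := val x.
have z7 : z ^+ 7 = 1 by rewrite /z -FinRing.val_unitX -ox expg_order.
have z_neq1 : z != 1.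
  apply: contraPneq ox => z1; have -> : x = 1%g by apply: val_inj.
  by rewrite order1.
have : (z - 1) * ((z ^+ 3 + z + 1) * (z ^+ 3 + z ^+ 2 + 1)) = 0.
  transitivity (z ^+ 7 - 1 + 2%:R * (z ^+ 4 - z ^+ 3)); first by ring.
  by rewrite z7 subrr add0r (pcharf0 ch) mul0r.
move/eqP; rewrite !mulf_eq0 subr_eq0 (negbTE z_neq1) /= => /orP[] /eqP root_z.
  by exists z; apply/eqP; rewrite -subr_eq0 GRing.subr_pchar2 // -root_z; apply/eqP; ring.
exists (z ^+ 3); have -> : (z ^+ 3) ^+ 3 = z ^+ 7 * z ^+ 2 by rewrite -exprM -exprD.
rewrite z7 mul1r; apply/eqP; rewrite eq_sym -subr_eq0 GRing.subr_pchar2 //.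
by rewrite -root_z; apply/eqP; ring.
Qed.

Section CountingFibers.

Variables (F : finFieldType) (m : nat) (a w : F).
Hypotheses (ch : 2 \in [pchar F]) (cardF : #|F| = (8 ^ m)%N) (m_odd : odd m).
Hypotheses (a_neq0 : a != 0) (w3 : w ^+ 3 = w + 1).

Lemma nrootsQ_embc b : nrootsQ (embc w b) = rootsc b.
Proof.
rewrite /nrootsQ (card_F8 ch w3); apply: eq_count => c /=.
by rewrite -(inj_eq (embc_inj ch w3)) embc0 /Qc /Qshift !(embcD, embcM, embcX).
Qed.

Lemma card_ker_trace : #|[set x : F | trace8 m x == 0]| = (2 ^ (3 * m - 3))%N.
Proof.
have m_gt0 : (0 < m)%N by case: m m_odd.
have := card_trace_pred ch cardF predT m_gt0; rewrite (card_F8 ch w3).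
have -> : #|[set x : F | predT (trace8 m x)]| = #|F| by apply: eq_card => x; rewrite inE.
rewrite cardF -(prednK m_gt0) expnS /= => /eqP; rewrite eqn_pmul2l // => /eqP <-.
by rewrite mulnS addKn expnM.
Qed.

Lemma fmap_fiber_1or4 x :
  (#|[set x' | fmap m a x' == fmap m a x]| == 1%N) ||
  (#|[set x' | fmap m a x' == fmap m a x]| == 4%N).
Proof.
rewrite card_fmap_fiber //.
have : trace8 m (a * x ^+ 3) \in [set c : F | inF8 c] by rewrite inE trace_inF8.
by rewrite (F8_image ch w3) => /imsetP[b _ ->]; rewrite nrootsQ_embc rootsc_1or4.
Qed.

(* The number of points with an r-element fiber: u = a x^3 runs over F, Tr u over F_8. *)
Lemma card_fmap_fiber_size r :
  #|[set x | #|[set x' | fmap m a x' == fmap m a x]| == r]| =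
    (count (pred1 r) (map rootsc enumc) * 2 ^ (3 * m - 3))%N.
Proof.
have m_gt0 : (0 < m)%N by case: m m_odd.
transitivity #|[set x | nrootsQ (trace8 m (a * x ^+ 3)) == r]|.
  by apply: eq_card => x; rewrite !inE card_fmap_fiber.
have -> : #|[set x : F | nrootsQ (trace8 m (a * x ^+ 3)) == r]| =
          #|[set u : F | nrootsQ (trace8 m u) == r]|.
  rewrite -[RHS](card_preimset _ (scaled_cube_inj m_odd cardF a_neq0)).
  by apply: eq_card => x; rewrite !inE.
rewrite (card_trace_pred ch cardF (fun t => nrootsQ t == r) m_gt0) card_ker_trace.
rewrite (card_F8 ch w3) count_map; congr (_ * _)%N.
by apply: eq_count => b; rewrite /= nrootsQ_embc.
Qed.

End CountingFibers.

Theorem proposition5p4 (F : finFieldType) (m : nat) (a : F) :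
  #|F| = (2 ^ (3 * m))%N -> odd m -> a != 0 ->
  [/\ Mr (fmap m a) 1 = (2 ^ (3 * m - 1))%N,
      Mr (fmap m a) 4 = (2 ^ (3 * m - 3))%N,
      (forall r : nat, (0 < r)%N -> r != 1%N -> r != 4%N -> Mr (fmap m a) r = 0%N)
    & #|[set fmap m a x | x : F]| = (5 * 2 ^ (3 * m - 3))%N].
Proof.
move=> cF m_odd a_neq0.
have cardF : #|F| = (8 ^ m)%N by rewrite cF expnM.
have ch : 2 \in [pchar F] := card_finPcharP cF (isT : prime 2).
have [w w3] : exists w : F, w ^+ 3 = w + 1.
  by apply: exists_F8_generator ch _; rewrite cardF dvd7_pow8_pred.
have m_gt0 : (0 < m)%N by case: m m_odd {cF cardF}.
have pow_3m1 : (2 ^ (3 * m - 1) = 4 * 2 ^ (3 * m - 3))%N.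
  by rewrite -[4%N]/(2 ^ 2)%N -expnD; congr (2 ^ _)%N; lia.
have Mr_eq r : (Mr (fmap m a) r * r =
    count (pred1 r) [:: 1; 4; 1; 4; 1; 4; 1; 4] * 2 ^ (3 * m - 3))%N.
  by rewrite Mr_mul (card_fmap_fiber_size ch cardF m_odd a_neq0 w3) rootsc_enum.
have M1 : Mr (fmap m a) 1 = (2 ^ (3 * m - 1))%N by rewrite -[LHS]muln1 Mr_eq pow_3m1.
have M4 : Mr (fmap m a) 4 = (2 ^ (3 * m - 3))%N.
  by apply/eqP; rewrite -(eqn_pmul2r (isT : 0 < 4)%N) Mr_eq mulnC.
split => // [r r_gt0 r_neq1 r_neq4 | ].
  have r14 : ((1 == r) = false) * ((4 == r) = false).
    by split; apply/negbTE; rewrite eq_sym.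
  by apply/eqP; rewrite -(eqn_pmul2r r_gt0) Mr_eq /= !r14.
rewrite (card_image_two_fiber_sizes _ _ _ (fmap_fiber_1or4 ch cardF m_odd a_neq0 w3)) //.
by rewrite M1 M4 pow_3m1 addnC -mulSn.
Qed.
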